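(* Let $\Lambda^*$ be a factorial language in $(\mathbb F_+^d)^N$ and fix $\emptyset\ne F\subseteq[N]$, with $F^c=[N]\setminus F$. The following are equivalent: (i) there exists $a\in\bigcap_{i\in F}\ker\phi_{\mathbf i}$ with $aQ_{F^c}\ne0$; (ii) there exists $a\in A$ with $aQ_{F^c}=Q_{\underline\emptyset}$; (iii) for every $\delta_i(k)\in\Lambda^*$ with $(i,k)\in F\times[d]$ there exists $\underline\mu\in\Lambda^*$ with $\underline\mu*\delta_i(k)\notin\Lambda^*$. If $F=[N]$, then (iii) is moreover equivalent to each of: (iv) $\bigcap_{i\in[N]}\ker\phi_{\mathbf i}=\mathbb CQ_{\underline\emptyset}$; (v) $\bigcap_{i\in[N]}\ker\phi_{\mathbf i}\ne(0)$; (vi) $Q_{\underline\emptyset}\in A$.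
   Context: $\mathbb F_+^d$ is the free semigroup on letters $[d]$ with empty word $\emptyset$. In $(\mathbb F_+^d)^N$: $\underline\mu*\underline\nu=(\mu_1\nu_1,\dots,\mu_N\nu_N)$; $|\underline\mu|=(|\mu_1|,\dots,|\mu_N|)$; $\delta_i(k)$ has the letter $k$ in coordinate $i$ and $\emptyset$ elsewhere; $\underline\emptyset=(\emptyset,\dots,\emptyset)$. A factorial language $\Lambda^*\subseteq(\mathbb F_+^d)^N$: for every $i\in[N]$ some $\delta_i(k)\in\Lambda^*$, and $\Lambda^*$ is closed under subwords. On $\ell^2(\Lambda^* )$ with basis $\{e_{\underline w}\}$, $T_{\underline\mu}e_{\underline w}=e_{\underline\mu*\underline w}$ if $\underline\mu*\underline w\in\Lambda^*$, $0$ otherwise. $A=C^*(T_{\underline\mu}^*T_{\underline\mu}:\underline\mu\in\Lambda^* )$. For $i\in[N]$, $P_{\mathbf i}=\sum_{k\in[d]}T_{\delta_i(k)}T_{\delta_i(k)}^*$; for $G\subseteq[N]$, $Q_G=\prod_{i\in G}(I-P_{\mathbf i})$ (with $Q_\emptyset=I$ for the empty set $G$). $Q_{\underline\emptyset}$ denotes the rank-one projection onto $\mathbb Ce_{\underline\emptyset}$ (it equals $Q_{[N]}$). $X_{\mathbf i}(\Lambda^* )=\overline{\operatorname{span}}\{T_{\delta_i(k)}a:a\in A,\ \delta_i(k)\in\Lambda^*\}$ and $\ker\phi_{\mathbf i}=\{a\in A:a\xi=0\ \forall\xi\in X_{\mathbf i}(\Lambda^* )\}$. *)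

(* concrete model of l^2(Lambda^* ) over C = R[i] (R a realType),
   with operators given by formulas on all functions W -> C, and all identities
   / norm estimates taken on l^2 vectors only. *)
From HB Require Import structures.
From mathcomp Require Import all_boot all_order all_algebra.
From mathcomp Require Import reals.
From mathcomp Require Import complex.
Set Implicit Arguments. Unset Strict Implicit. Unset Printing Implicit Defensive.
Import Order.TTheory GRing.Theory Num.Theory.
Local Open Scope ring_scope.

Section FactLang.
Variables (R : realType) (d N : nat).

Definition CC := R[i].
Definition rc (c : R) : CC := Complex c 0.

(* (F_+^d)^N : N-tuples of words over the alphabet [d] = 'I_d *)
Definition W := {ffun 'I_N -> seq 'I_d}.
Definition emptyW : W := [ffun _ => [::]].
Definition wcat (mu w : W) : W := [ffun i => mu i ++ w i].
Definition delta (i : 'I_N) (k : 'I_d) : W :=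
  [ffun j => if j == i then [:: k] else [::]].

Definition factorial_language (L : pred W) : Prop :=
  (forall i : 'I_N, exists k : 'I_d, L (delta i k)) /\
  (forall w u : W, L w -> (forall i, infix (u i) (w i)) -> L u).

Variable L : pred W.

Definition V := W -> CC.
Definition Op := V -> V.

Definition sqsum (f : V) (s : seq W) : CC := \sum_(w <- s) `|f w| ^+ 2.

Definition l2 (f : V) : Prop :=
  (forall w, ~~ L w -> f w = 0) /\
  exists M : R, forall s, uniq s -> sqsum f s <= rc M.

(* ||g|| <= c ||f||  (norms in l^2) *)
Definition norm_le (g : V) (c : R) (f : V) : Prop :=
  forall s, uniq s -> forall eta : R, 0 < eta ->
    exists t, uniq t /\ sqsum g s <= rc (c ^+ 2) * sqsum f t + rc eta.

Definition bounded (a : Op) : Prop :=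
  (forall f, l2 f -> l2 (a f)) /\
  (forall f g, l2 f -> l2 g -> a (fun w => f w + g w) = (fun w => a f w + a g w)) /\
  (forall (z : CC) f, l2 f -> a (fun w => z * f w) = (fun w => z * a f w)) /\
  exists c : R, 0 <= c /\ forall f, l2 f -> norm_le (a f) c f.

Definition opeq (a b : Op) : Prop := forall f, l2 f -> a f = b f.
Definition opdist_le (a b : Op) (eps : R) : Prop :=
  forall f, l2 f -> norm_le (fun w => a f w - b f w) eps f.

Definition op0 : Op := fun _ _ => 0.
Definition opid : Op := id.
Definition opadd (a b : Op) : Op := fun f w => a f w + b f w.
Definition opsub (a b : Op) : Op := fun f w => a f w - b f w.
Definition opscale (z : CC) (a : Op) : Op := fun f w => z * a f w.
Definition opmul (a b : Op) : Op := fun f => a (b f).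

Definition strip (mu v : W) : W := [ffun i => drop (size (mu i)) (v i)].
Definition T (mu : W) : Op := fun f v =>
  if [forall i, prefix (mu i) (v i)] && L v then f (strip mu v) else 0.
Definition Tadj (mu : W) : Op := fun f w =>
  if L (wcat mu w) then f (wcat mu w) else 0.

(* the algebra generated by {T_mu^* T_mu : mu in Lambda^*} (it is *-closed,
   the generators being self-adjoint and commuting) *)
Inductive alg0 : Op -> Prop :=
| alg0_gen mu : L mu -> alg0 (opmul (Tadj mu) (T mu))
| alg0_add a b : alg0 a -> alg0 b -> alg0 (opadd a b)
| alg0_scale z a : alg0 a -> alg0 (opscale z a)
| alg0_mul a b : alg0 a -> alg0 b -> alg0 (opmul a b).

Definition inA (a : Op) : Prop :=
  bounded a /\
  forall eps : R, 0 < eps -> exists p, alg0 p /\ opdist_le a p eps.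

Definition P (i : 'I_N) : Op :=
  \big[opadd/op0]_(k < d) opmul (T (delta i k)) (Tadj (delta i k)).
Definition Q (G : {set 'I_N}) : Op :=
  \big[opmul/opid]_(i in G) opsub opid (P i).
Definition Qempty : Op := fun f v => if v == emptyW then f v else 0.

Inductive spanX (i : 'I_N) : Op -> Prop :=
| spanX_0 : spanX i op0
| spanX_gen k a : L (delta i k) -> inA a -> spanX i (opmul (T (delta i k)) a)
| spanX_add a b : spanX i a -> spanX i b -> spanX i (opadd a b)
| spanX_scale z a : spanX i a -> spanX i (opscale z a).

Definition inX (i : 'I_N) (xi : Op) : Prop :=
  bounded xi /\
  forall eps : R, 0 < eps -> exists p, spanX i p /\ opdist_le xi p eps.

Definition in_ker_phi (i : 'I_N) (a : Op) : Prop :=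
  inA a /\ forall xi, inX i xi -> opeq (opmul a xi) op0.

End FactLang.

(* Each generator T_mu^* T_mu of A multiplies a vector by the indicator of
   {w | mu w in Lambda^*}, so every element of A is diagonal in the basis e_w, with
   a diagonal entry that only depends on the follower set
   {mu in Lambda^* | mu w in Lambda^*} of w; norm limits preserve both properties.
   An element of ker phi_i has a zero entry at every w with w_i nonempty, since
   e_w then lies in the range of some T_{delta_i(k)}.
   If a letter delta_i(k) with i in F cannot be blocked by any mu, it has the same
   follower set as the empty word, so every a in A has the same entry at both.
   For a in the kernels of the phi_i, i in F, this entry is 0, and so is the entry
   at every other word surviving Q_{F^c} (it is nonempty in a coordinate of F),
   whence a Q_{F^c} = 0; for a Q_{F^c} = Q_emptyset the two entries would be 1
   and 0.  Conversely, choosing a blocking word for every letter, the product of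
   the corresponding T_mu^* T_mu is the projection onto the words of Lambda^*
   that vanish on F: it witnesses (i) and (ii), and is Q_emptyset when F = [N]. *)

From HB Require Import structures.
From mathcomp Require Import all_boot all_order all_algebra.
From mathcomp Require Import boolp reals complex lra.
Import Order.TTheory GRing.Theory Num.Theory Normc.
Local Open Scope ring_scope.

Set Implicit Arguments. Unset Strict Implicit. Unset Printing Implicit Defensive.

Lemma le0_small_mul (R : realFieldType) (r K : R) :
  (forall e, 0 < e -> e <= 1 -> r <= e * K) -> r <= 0.
Proof.
move=> small; apply/ler_addgt0Pr => e e0; rewrite add0r.
have K1 : 0 < `|K| + 1 by rewrite ltr_wpDl.
pose t := Num.min 1 (e / (`|K| + 1)).
have t0 : 0 < t by rewrite lt_min ltr01 divr_gt0.
have t1 : t <= 1 by rewrite ge_min lexx.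
have te : t * (`|K| + 1) <= e by rewrite -ler_pdivlMr // ge_min lexx orbT.
apply: le_trans (small t t0 t1) (le_trans _ te).
by rewrite ler_wpM2l ?(ltW t0) //; have := ler_norm K; lra.
Qed.

Section ComplexModulus.
Variable R : rcfType.
Implicit Types x y : R[i].
Local Open Scope complex_scope.

Lemma normc_ge0 x : 0 <= normc x.
Proof. by case: x => a b; apply: sqrtr_ge0. Qed.

Lemma normcE x : `|x| = (normc x)%:C.
Proof. by rewrite normc_def; case: x. Qed.

Lemma normcB x y : normc (x - y) = normc (y - x).
Proof. by rewrite -normcN opprB. Qed.

Lemma normcD_sqr x y : normc (x + y) ^+ 2 <= 2 * normc x ^+ 2 + 2 * normc y ^+ 2.
Proof.
have := le_normcD x y; have := normc_ge0 (x + y).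
have := normc_ge0 x; have := normc_ge0 y.
move: (normc (x + y)) (normc x) (normc y) => c a b b0 a0 c0 cab.
have : c ^+ 2 <= (a + b) ^+ 2 by rewrite lerXn2r ?nnegrE ?addr_ge0.
have := sqr_ge0 (a - b); nra.
Qed.

Lemma normc_small_eq0 x (K : R) :
  (forall e, 0 < e -> e <= 1 -> normc x ^+ 2 <= e * K) -> x = 0.
Proof.
move/le0_small_mul => le0; apply: eq0_normc; apply/eqP.
have : normc x ^+ 2 == 0 by rewrite eq_le le0 exprn_ge0 ?normc_ge0.
by rewrite expf_eq0.
Qed.

End ComplexModulus.

Section FactorialLanguage.
Variables (R : realType) (d N : nat) (L : pred (W d N)).
Hypothesis L_infix : forall w u : W d N, L w -> (forall i, infix (u i) (w i)) -> L u.
Hypothesis L_emptyW : L (emptyW d N).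

Local Notation word := (W d N).
Local Notation vec := (V R d N).
Local Notation op := (Op R d N).
Local Notation e0 := (emptyW d N).
Implicit Types (w u v mu : word) (f g : vec) (a b p : op) (i j : 'I_N) (k : 'I_d).
Implicit Types (F G : {set 'I_N}) (S : pred word).

Lemma wcat0w w : wcat e0 w = w.
Proof. by apply/ffunP=> i; rewrite !ffunE. Qed.

Lemma wcatw0 w : wcat w e0 = w.
Proof. by apply/ffunP=> i; rewrite !ffunE cats0. Qed.

Lemma wcatA u v w : wcat u (wcat v w) = wcat (wcat u v) w.
Proof. by apply/ffunP=> i; rewrite !ffunE catA. Qed.

Lemma strip_wcat mu w : strip mu (wcat mu w) = w.
Proof. by apply/ffunP=> i; rewrite !ffunE drop_size_cat. Qed.

Lemma prefix_wcat mu w : [forall i, prefix (mu i) (wcat mu w i)].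
Proof. by apply/forallP=> i; rewrite ffunE prefix_prefix. Qed.

Lemma wcat_strip mu v : [forall i, prefix (mu i) (v i)] -> wcat mu (strip mu v) = v.
Proof.
move/forallP=> pre; apply/ffunP=> i; rewrite !ffunE.
by have [s ->] := prefixP (pre i); rewrite drop_size_cat.
Qed.

Lemma prefix_deltaE i k w :
  [forall j, prefix (delta i k j) (w j)] = (ohead (w i) == Some k).
Proof.
apply/forallP/eqP => [/(_ i)|wik j].
  by rewrite ffunE eqxx; case: (w i) => [|y s] // /andP [/eqP -> _].
rewrite ffunE; case: eqP => [->|_]; last exact: prefix0s.
by case: (w i) wik => [|y s] // [->] /=; rewrite eqxx prefix0s.
Qed.

Lemma wcat_delta_strip j w :
  w j != [::] -> exists k, w = wcat (delta j k) (strip (delta j k) w).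
Proof.
by case wj: (w j) => [|k s] // _; exists k; rewrite wcat_strip // prefix_deltaE wj.
Qed.

Lemma eq_emptyW w : (w == e0) = [forall j, w j == [::]].
Proof.
apply/eqP/forallP => [-> j|w0]; first by rewrite ffunE.
by apply/ffunP => j; rewrite ffunE; apply/eqP.
Qed.

Lemma delta_neq0 i k : delta i k != e0.
Proof. by rewrite eq_emptyW; apply/forallPn; exists i; rewrite ffunE eqxx. Qed.

Lemma L_wcatl mu w : L (wcat mu w) -> L mu.
Proof. by move/L_infix; apply=> i; rewrite ffunE prefix_infix. Qed.

Lemma L_wcatr mu w : L (wcat mu w) -> L w.
Proof. by move/L_infix; apply=> i; rewrite ffunE suffix_infix. Qed.

Definition follower_eq u v := forall mu, L mu -> L (wcat mu u) = L (wcat mu v).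

Definition unit_vec u : vec := fun w => if w == u then 1 else 0.
Definition supported f := forall w, ~~ L w -> f w = 0.
Definition sqsum_le f (M : R) :=
  forall s, uniq s -> \sum_(w <- s) normc (f w) ^+ 2 <= M.

Lemma rcE (c : R) : rc c = c%:C%C.
Proof. by []. Qed.

Lemma sqsumE f s : sqsum f s = (\sum_(w <- s) normc (f w) ^+ 2)%:C%C.
Proof. by rewrite /sqsum rmorph_sum; apply: eq_bigr => w _; rewrite normcE rmorphXn. Qed.

Lemma sqsum_le_ge0 f M : sqsum_le f M -> 0 <= M.
Proof. by move/(_ [::] isT); rewrite big_nil. Qed.

Lemma sqsum_le_pt f M w : sqsum_le f M -> normc (f w) ^+ 2 <= M.
Proof. by move/(_ [:: w] isT); rewrite big_seq1. Qed.

Lemma sqsum_ge0 f (s : seq word) : 0 <= \sum_(w <- s) normc (f w) ^+ 2.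
Proof. by apply: sumr_ge0 => w _; rewrite exprn_ge0 ?normc_ge0. Qed.

Lemma l2P f : l2 L f <-> supported f /\ exists M, sqsum_le f M.
Proof.
split=> -[supp [M bnd]]; split=> //; exists M => s us.
  by have := bnd s us; rewrite sqsumE rcE lecR.
by rewrite sqsumE rcE lecR; apply: bnd.
Qed.

Lemma norm_leP g c f : norm_le g c f <->
  forall s, uniq s -> forall eta : R, 0 < eta -> exists t, uniq t /\
    \sum_(w <- s) normc (g w) ^+ 2 <= c ^+ 2 * \sum_(w <- t) normc (f w) ^+ 2 + eta.
Proof.
have E s t eta : (sqsum g s <= rc (c ^+ 2) * sqsum f t + rc eta) =
    (\sum_(w <- s) normc (g w) ^+ 2 <= c ^+ 2 * \sum_(w <- t) normc (f w) ^+ 2 + eta).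
  by rewrite !sqsumE !rcE -rmorphM -rmorphD lecR.
split=> nle s us eta eta0; have [t [ut le_t]] := nle s us eta eta0.
  by exists t; rewrite -E.
by exists t; rewrite E.
Qed.

Lemma unit_vec_id u : unit_vec u u = 1.
Proof. by rewrite /unit_vec eqxx. Qed.

Lemma unit_vec_sqsum_le u : sqsum_le (unit_vec u) 1.
Proof.
move=> s us; rewrite (eq_bigr (fun w => if w == u then 1 else 0)); last first.
  by move=> w _; rewrite /unit_vec; case: eqP; rewrite ?normc1 ?normc0 ?expr1n ?expr0n.
rewrite -big_mkcond big_const_seq.
by have := count_uniq_mem u us => /= ->; case: (u \in s); rewrite /= ?addr0.
Qed.

Lemma unit_vec_l2 u : L u -> l2 L (unit_vec u).
Proof.
move=> Lu; apply/l2P; split; last by exists 1; apply: unit_vec_sqsum_le.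
by move=> w; rewrite /unit_vec; case: eqP => // ->; rewrite Lu.
Qed.

Lemma l2D f g : l2 L f -> l2 L g -> l2 L (fun w => f w + g w).
Proof.
move=> /l2P [suppf [Mf bndf]] /l2P [suppg [Mg bndg]]; apply/l2P; split.
  by move=> w Lw; rewrite suppf // suppg // addr0.
exists (2 * Mf + 2 * Mg) => s us; apply: le_trans (ler_sum _ (fun w _ => normcD_sqr _ _)) _.
rewrite big_split /= -!mulr_sumr.
by have := bndf s us; have := bndg s us; lra.
Qed.

Lemma l2Z z f : l2 L f -> l2 L (fun w => z * f w).
Proof.
move=> /l2P [supp [M bnd]]; apply/l2P; split.
  by move=> w Lw; rewrite supp // mulr0.
exists (normc z ^+ 2 * M) => s us.
under eq_bigr do rewrite normcM exprMn.
by rewrite -mulr_sumr ler_wpM2l ?exprn_ge0 ?normc_ge0 ?bnd.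
Qed.

Definition TadjT mu : op := opmul (Tadj L mu) (T L mu).

Lemma TadjTE mu f w : TadjT mu f w = if L (wcat mu w) then f w else 0.
Proof.
rewrite /TadjT /opmul /Tadj /T.
by case: ifP => // Lmuw; rewrite prefix_wcat Lmuw strip_wcat.
Qed.

Definition is_diag a (m : word -> CC R) := forall f w, a f w = m w * f w.
Definition follower_invariant (m : word -> CC R) :=
  forall u v, follower_eq u v -> m u = m v.

Lemma alg0_diag p : alg0 L p -> exists2 m, is_diag p m &
  (exists C, forall w, normc (m w) <= C) /\ follower_invariant m.
Proof.
elim=> {p} [mu Lmu | a b _ [ma ha [[Ca hCa] ia]] _ [mb hb [[Cb hCb] ib]]
           | z a _ [ma ha [[Ca hCa] ia]] | a b _ [ma ha [[Ca hCa] ia]] _ [mb hb [[Cb hCb] ib]]].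
- exists (fun w => (L (wcat mu w))%:R).
    by move=> f w; rewrite -[opmul _ _]/(TadjT mu) TadjTE; case: ifP; rewrite ?mul1r ?mul0r.
  split; last by move=> u v fuv /=; rewrite (fuv mu Lmu).
  by exists 1 => w; case: (L _); rewrite ?normc1 ?normc0 ?ler01.
- exists (fun w => ma w + mb w); first by move=> f w; rewrite /opadd ha hb mulrDl.
  split; last by move=> u v fuv /=; rewrite (ia u v fuv) (ib u v fuv).
  by exists (Ca + Cb) => w; apply: le_trans (le_normcD _ _) (lerD _ _).
- exists (fun w => z * ma w); first by move=> f w; rewrite /opscale ha mulrA.
  split; last by move=> u v fuv /=; rewrite (ia u v fuv).
  by exists (normc z * Ca) => w; rewrite normcM ler_wpM2l ?normc_ge0.
- exists (fun w => ma w * mb w); first by move=> f w; rewrite /opmul ha hb mulrA.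
  split; last by move=> u v fuv /=; rewrite (ia u v fuv) (ib u v fuv).
  by exists (Ca * Cb) => w; rewrite normcM ler_pM ?normc_ge0.
Qed.

Lemma diag_bounded a m C : (forall w, normc (m w) <= C) -> is_diag a m -> bounded L a.
Proof.
move=> hC ha; have C0 : 0 <= C := le_trans (normc_ge0 _) (hC e0).
have sq_le f w : normc (a f w) ^+ 2 <= C ^+ 2 * normc (f w) ^+ 2.
  rewrite ha normcM exprMn ler_wpM2r ?exprn_ge0 ?normc_ge0 //.
  by rewrite lerXn2r ?nnegrE ?normc_ge0.
have sum_le f s : \sum_(w <- s) normc (a f w) ^+ 2 <=
                  C ^+ 2 * \sum_(w <- s) normc (f w) ^+ 2.
  by rewrite mulr_sumr; apply: ler_sum => w _.
split; [|split; [|split]].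
- move=> f /l2P [supp [M bnd]]; apply/l2P; split.
    by move=> w Lw; rewrite ha supp // mulr0.
  exists (C ^+ 2 * M) => s us; apply: le_trans (sum_le f s) _.
  by rewrite ler_wpM2l ?exprn_ge0 ?bnd.
- by move=> f g _ _; apply: funext => w; rewrite !ha mulrDr.
- by move=> z f _; apply: funext => w; rewrite !ha mulrCA.
- exists C; split=> // f _; apply/norm_leP => s us eta eta0; exists s; split=> //.
  by have := sum_le f s; lra.
Qed.

Lemma opdist_le_refl a eps : opdist_le L a a eps.
Proof.
move=> f _; apply/norm_leP => s us eta eta0; exists s; split=> //.
rewrite big1 => [|w _]; last by rewrite subrr normc0 expr0n.
by have := sqsum_ge0 f s; have := sqr_ge0 eps; nra.
Qed.

Lemma alg0_inA p : alg0 L p -> inA L p.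
Proof.
move=> alg_p; split; last by move=> eps _; exists p; split=> //; apply: opdist_le_refl.
by have [m diag_m [[C hC] _]] := alg0_diag alg_p; apply: diag_bounded hC diag_m.
Qed.

Lemma opdist_le_pt a p eps f M w : 0 < eps -> opdist_le L a p eps ->
  l2 L f -> sqsum_le f M -> normc (a f w - p f w) ^+ 2 <= eps ^+ 2 * (M + 1).
Proof.
move=> eps0 dist l2f bnd; have /norm_leP {}dist := dist f l2f.
have [t [ut]] := dist [:: w] isT (eps ^+ 2) (exprn_gt0 _ eps0).
rewrite big_seq1.
by have := bnd t ut; have := sqr_ge0 eps; nra.
Qed.

Lemma inA_approx_diag a eps : inA L a -> 0 < eps -> eps <= 1 ->
  exists2 m, follower_invariant m & forall f M w, l2 L f -> sqsum_le f M ->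
    normc (a f w - m w * f w) ^+ 2 <= eps * (M + 1).
Proof.
move=> [_ approx] eps0 eps1; have [p [alg_p dist]] := approx eps eps0.
have [m diag_m [_ inv_m]] := alg0_diag alg_p.
exists m => // f M w l2f bnd; rewrite -diag_m.
have := opdist_le_pt w eps0 dist l2f bnd; have := sqsum_le_ge0 bnd.
have : eps ^+ 2 <= eps by rewrite expr2 ger_pMl.
nra.
Qed.

Definition diag_entry a w := a (unit_vec w) w.

Lemma inA_supported a f : inA L a -> l2 L f -> supported (a f).
Proof. by move=> [[l2a _] _] /l2a /l2P []. Qed.

Lemma inA_diag a f w : inA L a -> l2 L f -> L w -> a f w = diag_entry a w * f w.
Proof.
move=> inAa l2f Lw; have /l2P [_ [M bnd]] := l2f; have M0 := sqsum_le_ge0 bnd.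
apply/eqP; rewrite -subr_eq0; apply/eqP; rewrite /diag_entry.
apply: (normc_small_eq0 (K := 6 * M + 2)) => e e0 e1.
have [m _ near_m] := inA_approx_diag inAa e0 e1.
have near_f := near_m f M w l2f bnd.
have near_e := near_m _ 1 w (unit_vec_l2 Lw) (unit_vec_sqsum_le w).
rewrite unit_vec_id mulr1 normcB in near_e.
have -> : a f w - a (unit_vec w) w * f w =
          (a f w - m w * f w) + (m w - a (unit_vec w) w) * f w.
  by rewrite mulrBl addrA subrK.
apply: le_trans (normcD_sqr _ _) _; rewrite normcM exprMn.
have : normc (m w - a (unit_vec w) w) ^+ 2 * normc (f w) ^+ 2 <= e * (1 + 1) * M.
  by apply: ler_pM; rewrite ?exprn_ge0 ?normc_ge0 ?sqsum_le_pt.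
move: near_f; nra.
Qed.

Lemma inA_diag_entry_follower a u v : inA L a -> L u -> L v -> follower_eq u v ->
  diag_entry a u = diag_entry a v.
Proof.
move=> inAa Lu Lv fuv; apply/eqP; rewrite -subr_eq0; apply/eqP; rewrite /diag_entry.
apply: (normc_small_eq0 (K := 8)) => e e0 e1.
have [m inv_m near_m] := inA_approx_diag inAa e0 e1.
have near_u := near_m _ 1 u (unit_vec_l2 Lu) (unit_vec_sqsum_le u).
have near_v := near_m _ 1 v (unit_vec_l2 Lv) (unit_vec_sqsum_le v).
rewrite !unit_vec_id !mulr1 (inv_m u v fuv) in near_u near_v.
rewrite -(subrK (m v) (a (unit_vec u) u)) -addrA.
apply: le_trans (normcD_sqr _ _) _; rewrite [normc (m v - _)]normcB.
by move: near_u near_v; lra.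
Qed.

Lemma inA_ext a b : opeq L a b -> inA L b -> inA L a.
Proof.
move=> eq_ab [[l2b [addb [scaleb [c [c0 normb]]]]] approx]; split; last first.
  move=> eps eps0; have [p [alg_p dist]] := approx eps eps0.
  by exists p; split=> // f l2f; rewrite eq_ab //; apply: dist.
split; [|split; [|split]].
- by move=> f l2f; rewrite eq_ab //; apply: l2b.
- move=> f g l2f l2g.
  by rewrite (eq_ab _ (l2D l2f l2g)) addb // (eq_ab f) // (eq_ab g).
- by move=> z f l2f; rewrite (eq_ab _ (l2Z z l2f)) scaleb // eq_ab.
- by exists c; split=> // f l2f; rewrite eq_ab //; apply: normb.
Qed.

(* [TadjT e0] acts as the identity on l^2(Lambda^* ), but unlike the identity it
   lies in A, as [spanX_gen] requires. *)
Definition creation i k : op := opmul (T L (delta i k)) (TadjT e0).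

Lemma creationE i k f v : creation i k f v =
  if (ohead (v i) == Some k) && L v then f (strip (delta i k) v) else 0.
Proof.
rewrite /creation /opmul /T prefix_deltaE TadjTE wcat0w.
case: ifP => // /andP [vik Lv].
have v_eq : v = wcat (delta i k) (strip (delta i k) v).
  by rewrite wcat_strip ?prefix_deltaE.
by rewrite v_eq in Lv; rewrite (L_wcatr Lv).
Qed.

Lemma creation_unit_vec i k u : L (wcat (delta i k) u) ->
  creation i k (unit_vec u) = unit_vec (wcat (delta i k) u).
Proof.
move=> Lw; apply: funext => v; rewrite creationE /unit_vec.
have [->|neq] := eqVneq v (wcat (delta i k) u).
  by rewrite strip_wcat eqxx Lw !ffunE eqxx /= eqxx.
case: ifP => // /andP [vik _]; case: eqP => // strip_v; case/eqP: neq.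
by rewrite -strip_v wcat_strip // prefix_deltaE.
Qed.

Lemma creation_sqsum i k f s : uniq s -> exists t, uniq t /\
  \sum_(v <- s) normc (creation i k f v) ^+ 2 <= \sum_(u <- t) normc (f u) ^+ 2.
Proof.
move=> us; pose starts_k v := ohead (v i) == Some k.
exists (map (strip (delta i k)) (filter starts_k s)); split.
  rewrite map_inj_in_uniq ?filter_uniq // => v1 v2.
  rewrite !mem_filter => /andP [v1k _] /andP [v2k _] eq_strip.
  rewrite -[v1](wcat_strip (mu := delta i k)) ?prefix_deltaE // eq_strip.
  by rewrite wcat_strip ?prefix_deltaE.
rewrite big_map big_filter [X in _ <= X]big_mkcond /=; apply: ler_sum => v _.
rewrite creationE /starts_k; case: (ohead _ == _); last by rewrite andFb normc0 expr0n.
by rewrite andTb; case: ifP => _ //; rewrite normc0 expr0n exprn_ge0 ?normc_ge0.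
Qed.

Lemma creation_bounded i k : bounded L (creation i k).
Proof.
split; [|split; [|split]].
- move=> f /l2P [supp [M bnd]]; apply/l2P; split.
    by move=> v Lv; rewrite creationE (negbTE Lv) andbF.
  exists M => s us; have [t [ut le_t]] := creation_sqsum i k f us.
  exact: le_trans le_t (bnd t ut).
- by move=> f g _ _; apply: funext => v; rewrite !creationE; case: ifP; rewrite ?addr0.
- by move=> z f _; apply: funext => v; rewrite !creationE; case: ifP; rewrite ?mulr0.
- exists 1; split=> // f _; apply/norm_leP => s us eta eta0.
  have [t [ut le_t]] := creation_sqsum i k f us; exists t; split=> //.
  by rewrite expr1n mul1r; lra.
Qed.

Lemma creation_inX i k : L (delta i k) -> inX L i (creation i k).
Proof.
move=> Lik; split; first exact: creation_bounded.
move=> eps _; exists (creation i k); split; last exact: opdist_le_refl.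
by apply: spanX_gen => //; apply/alg0_inA/alg0_gen.
Qed.

Lemma ker_phi_unit_vec a i k u : in_ker_phi L i a -> L (wcat (delta i k) u) ->
  a (unit_vec (wcat (delta i k) u)) = fun _ => 0.
Proof.
move=> [_ ker] Lw; rewrite -creation_unit_vec //.
exact: ker _ (creation_inX (L_wcatl Lw)) _ (unit_vec_l2 (L_wcatr Lw)).
Qed.

Lemma ker_phi_diag_entry a j w : in_ker_phi L j a -> L w -> w j != [::] ->
  diag_entry a w = 0.
Proof.
move=> ker Lw /wcat_delta_strip [k w_eq].
by rewrite /diag_entry [in unit_vec w]w_eq (ker_phi_unit_vec ker) -?w_eq.
Qed.

Lemma spanX_vanish i p f w : spanX L i p -> w i = [::] -> p f w = 0.
Proof.
move=> span_p wi; elim: span_p f => {p} [|k a _ _|a b _ IHa _ IHb|z a _ IHa] f.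
- by [].
- by rewrite /opmul /T prefix_deltaE wi.
- by rewrite /opadd IHa IHb addr0.
- by rewrite /opscale IHa mulr0.
Qed.

Lemma inX_vanish i x f w : inX L i x -> l2 L f -> w i = [::] -> x f w = 0.
Proof.
move=> [_ approx] l2f wi; have /l2P [_ [M bnd]] := l2f.
have M0 := sqsum_le_ge0 bnd.
apply: (normc_small_eq0 (K := M + 1)) => e e0 e1.
have [p [span_p dist]] := approx e e0.
have := opdist_le_pt w e0 dist l2f bnd; rewrite (spanX_vanish _ span_p wi) subr0.
have : e ^+ 2 <= e by rewrite expr2 ger_pMl.
nra.
Qed.

Lemma big_opadd_apply (I : Type) (r : seq I) (P : pred I) (G : I -> op) f w :
  (\big[@opadd R d N/@op0 R d N]_(k <- r | P k) G k) f w = \sum_(k <- r | P k) G k f w.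
Proof. by apply: (big_rec2 (fun (x : op) y => x f w = y)) => // k y x _ <-. Qed.

Lemma P_E i f w : P L i f w = if (w i != [::]) && L w then f w else 0.
Proof.
rewrite /P big_opadd_apply.
rewrite (eq_bigr (fun k => if (ohead (w i) == Some k) && L w then f w else 0)).
  case: (w i) => [|y s] /=; first by rewrite big1.
  rewrite (bigD1 y) //= eqxx big1 ?addr0 // => k neq_ky.
  by case: eqP => // -[eq_yk]; rewrite eq_yk eqxx in neq_ky.
move=> k _; rewrite /opmul /T prefix_deltaE /Tadj.
by case: ifP => // /andP [wik Lw]; rewrite wcat_strip ?Lw // prefix_deltaE.
Qed.

Definition restrict S f : vec := fun w => if S w then f w else 0.

Definition vanishes_on G : pred word :=
  fun w => [forall j in G, w j == [::]].

Lemma Q_E G f : supported f -> Q L G f = restrict (vanishes_on G) f.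
Proof.
move=> supp; rewrite /Q.
have -> : vanishes_on G =
    (fun w => all (fun j => (j \in G) ==> (w j == [::])) (index_enum 'I_N)).
  apply: funext => w; apply/forallP/allP => [van j _|van j]; first exact: van.
  exact: van j (mem_index_enum j).
elim: (index_enum _) => [|j s IH]; first by rewrite big_nil; apply: funext.
rewrite big_cons /=; case: ifP => jG /=; last by rewrite IH.
apply: funext => w; rewrite /opmul /opsub /opid P_E IH /restrict /=.
case: eqP => [_|wj] /=; first by rewrite subr0.
case Lw: (L w); first by rewrite subrr.
by rewrite subr0; case: ifP => // _; rewrite supp ?Lw.
Qed.

Lemma restrict_l2 S f : l2 L f -> l2 L (restrict S f).
Proof.
move=> /l2P [supp [M bnd]]; apply/l2P; split.
  by move=> w Lw; rewrite /restrict supp //; case: ifP.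
exists M => s us; apply: le_trans (bnd s us); apply: ler_sum => w _.
by rewrite /restrict; case: ifP => // _; rewrite normc0 expr0n exprn_ge0 ?normc_ge0.
Qed.

Lemma Q_l2 G f : l2 L f -> l2 L (Q L G f).
Proof. by move=> l2f; have /l2P [supp _] := l2f; rewrite Q_E //; apply: restrict_l2. Qed.

Lemma Q_unit_vec G u : L u -> vanishes_on G u -> Q L G (unit_vec u) = unit_vec u.
Proof.
move=> Lu van_u; have /l2P [supp _] := unit_vec_l2 Lu; rewrite Q_E //.
by apply: funext => w; rewrite /restrict /unit_vec; case: eqP => [->|]; rewrite ?van_u //; case: ifP.
Qed.

Lemma vanishes_on_emptyW G : vanishes_on G e0.
Proof. by apply/forall_inP => j _; rewrite ffunE. Qed.

Definition letters_blockable (F : {set 'I_N}) :=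
  forall (i : 'I_N) (k : 'I_d), i \in F -> L (delta i k) ->
  exists mu, L mu /\ ~~ L (wcat mu (delta i k)).

Lemma unblockable_follower_eq i k :
  ~ (exists mu, L mu /\ ~~ L (wcat mu (delta i k))) -> follower_eq e0 (delta i k).
Proof.
move=> unblock mu Lmu; rewrite wcatw0 Lmu; apply/esym/negPn/negP => out.
by apply: unblock; exists mu.
Qed.

Lemma delta_nonempty i k : delta i k i != [::].
Proof. by rewrite ffunE eqxx. Qed.

Lemma vanishes_on_setC_delta F i k : i \in F -> vanishes_on (~: F) (delta i k).
Proof.
by move=> iF; apply/forall_inP => j; rewrite in_setC ffunE; have [->|] := eqVneq j i; rewrite ?iF.
Qed.

Lemma Qempty_neq0 : ~ opeq L (@Qempty R d N) (@op0 R d N).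
Proof.
move=> /(_ _ (unit_vec_l2 L_emptyW)) /(congr1 (fun g => g e0)).
by rewrite /Qempty /op0 eqxx unit_vec_id => /eqP; rewrite oner_eq0.
Qed.

Lemma ker_phi_Q_eq0 F a : inA L a -> (forall i, i \in F -> in_ker_phi L i a) ->
  diag_entry a e0 = 0 -> opeq L (opmul a (Q L (~: F))) (@op0 R d N).
Proof.
move=> inAa ker a00 f l2f; have l2Qf := Q_l2 (~: F) l2f; apply: funext => w.
rewrite /opmul /op0; case Lw: (L w); last exact: inA_supported inAa l2Qf _ (negbT Lw).
rewrite (inA_diag inAa l2Qf Lw); have [->|w_neq0] := eqVneq w e0; first by rewrite a00 mul0r.
have /l2P [supp _] := l2f; rewrite Q_E // /restrict; case: ifP => [van|_]; last by rewrite mulr0.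
have /forallPn [j wj] : ~~ [forall j, w j == [::]] by rewrite -eq_emptyW.
have jF : j \in F.
  by apply: contraT => jnF; move: wj; rewrite (forall_inP van j) // in_setC.
by rewrite (ker_phi_diag_entry (ker j jF) Lw wj) mul0r.
Qed.

Lemma blockable_of_ker_phi F a : (forall i, i \in F -> in_ker_phi L i a) ->
  ~ opeq L (opmul a (Q L (~: F))) (@op0 R d N) -> letters_blockable F.
Proof.
move=> ker aQ_neq0 i k iF Lik; apply: contrapT => unblock; apply: aQ_neq0.
have inAa := (ker i iF).1; apply: ker_phi_Q_eq0 => //.
rewrite (inA_diag_entry_follower inAa L_emptyW Lik (unblockable_follower_eq unblock)).
exact: ker_phi_diag_entry (ker i iF) Lik (delta_nonempty i k).
Qed.

Lemma blockable_of_inA_Q F a : inA L a ->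
  opeq L (opmul a (Q L (~: F))) (@Qempty R d N) -> letters_blockable F.
Proof.
move=> inAa aQ i k iF Lik; apply: contrapT => unblock.
have entry u : L u -> vanishes_on (~: F) u -> diag_entry a u = Qempty (unit_vec u) u.
  move=> Lu van; rewrite /diag_entry -aQ; last exact: unit_vec_l2.
  by rewrite -{1}(Q_unit_vec Lu van).
have := inA_diag_entry_follower inAa L_emptyW Lik (unblockable_follower_eq unblock).
rewrite !entry ?vanishes_on_emptyW ?vanishes_on_setC_delta //.
by rewrite /Qempty !unit_vec_id eqxx (negbTE (delta_neq0 i k)) => /eqP; rewrite oner_eq0.
Qed.

Lemma blockable_restrict_alg0 F : letters_blockable F -> exists S : pred word,
  [/\ alg0 L (restrict S), S e0 & forall w, S w -> L w && vanishes_on F w].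
Proof.
move=> block.
have pick (pk : 'I_N * 'I_d) : exists mu, L mu &&
    ((pk.1 \in F) && L (delta pk.1 pk.2) ==> ~~ L (wcat mu (delta pk.1 pk.2))).
  case: pk => i k /=; have [/andP [iF Lik]|_] := boolP ((i \in F) && L (delta i k)).
    by have [mu [Lmu out]] := block i k iF Lik; exists mu; rewrite Lmu out.
  by exists e0; rewrite L_emptyW.
have [mu mu_spec] := choice pick.
pose S w := L w && all (fun pk => L (wcat (mu pk) w)) (index_enum ('I_N * 'I_d)%type).
exists S; split.
- have -> : restrict S = \big[@opmul R d N/TadjT e0]_(pk <- index_enum _) TadjT (mu pk).
    apply: funext => f; apply: funext => w; rewrite /restrict /S.
    elim: (index_enum _) => [|pk s IH]; first by rewrite big_nil TadjTE wcat0w andbT.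
    by rewrite big_cons /opmul TadjTE -IH /=; case: (L (wcat _ w)); rewrite ?andbF.
  apply: (big_rec (alg0 L)) => [|pk p _ alg_p]; first exact: alg0_gen.
  by apply: alg0_mul => //; apply: alg0_gen; have /andP [] := mu_spec pk.
- rewrite /S /= L_emptyW; apply/allP => pk _; rewrite wcatw0.
  by have /andP [] := mu_spec pk.
- move=> w /andP [Lw all_mu]; rewrite Lw; apply/forall_inP => i iF.
  apply: contraT => /wcat_delta_strip [k w_eq].
  have Lik : L (delta i k) by rewrite w_eq in Lw; apply: L_wcatl Lw.
  have /andP [_] := mu_spec (i, k); rewrite /= iF Lik /= => /negbTE <-.
  by have := allP all_mu (i, k) (mem_index_enum _); rewrite /= w_eq wcatA => /L_wcatl.
Qed.

Lemma restrict_Q_Qempty F S : S e0 -> (forall w, S w -> L w && vanishes_on F w) ->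
  opeq L (opmul (restrict S) (Q L (~: F))) (@Qempty R d N).
Proof.
move=> S0 S_van f l2f; have /l2P [supp _] := l2f; rewrite /opmul Q_E //.
apply: funext => w; rewrite /restrict /Qempty.
have [->|w_neq0] := eqVneq w e0; first by rewrite S0 vanishes_on_emptyW.
case Sw: (S w) => //; have /andP [_ vanF] := S_van w Sw; case: ifP => // vanFc.
case/eqP: w_neq0; apply/eqP; rewrite eq_emptyW; apply/forallP => j.
have [jF|jnF] := boolP (j \in F); first exact: forall_inP vanF j jF.
by apply: (forall_inP vanFc); rewrite in_setC.
Qed.

Lemma ker_phi_Q_neq0P F : (exists a, (forall i, i \in F -> in_ker_phi L i a) /\
  ~ opeq L (opmul a (Q L (~: F))) (@op0 R d N)) <-> letters_blockable F.
Proof.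
split=> [[a [ker aQ]]|block]; first exact: blockable_of_ker_phi ker aQ.
have [S [alg_S S0 S_van]] := blockable_restrict_alg0 block.
exists (restrict S); split.
  move=> i iF; split; first exact: alg0_inA.
  move=> x inXx f l2f; apply: funext => w; rewrite /opmul /restrict.
  case: ifP => // Sw; have /andP [_ /forall_inP vanF] := S_van w Sw.
  exact: inX_vanish inXx l2f (eqP (vanF i iF)).
move=> aQ0; apply: Qempty_neq0 => f l2f.
by rewrite -(restrict_Q_Qempty S0 S_van l2f) aQ0.
Qed.

Lemma inA_Q_QemptyP F : (exists a, inA L a /\
  opeq L (opmul a (Q L (~: F))) (@Qempty R d N)) <-> letters_blockable F.
Proof.
split=> [[a [inAa aQ]]|block]; first exact: blockable_of_inA_Q inAa aQ.
have [S [alg_S S0 S_van]] := blockable_restrict_alg0 block.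
by exists (restrict S); split; [apply: alg0_inA | apply: restrict_Q_Qempty].
Qed.

Lemma Q_setCT : Q L (~: setT) = @opid R d N.
Proof. by rewrite setCT /Q big_pred0 // => i; rewrite in_set0. Qed.

Lemma alg0_Qempty : letters_blockable setT -> alg0 L (@Qempty R d N).
Proof.
move=> /blockable_restrict_alg0 [S [alg_S S0 S_van]].
suff -> : @Qempty R d N = restrict S by [].
apply: funext => f; apply: funext => w; rewrite /Qempty /restrict.
have [->|w_neq0] := eqVneq w e0; first by rewrite S0.
case Sw: (S w) => //; have /andP [_ van] := S_van w Sw.
case/eqP: w_neq0; apply/eqP; rewrite eq_emptyW; apply/forallP => j.
exact: forall_inP van j (in_setT j).
Qed.

Lemma ker_phi_scalarP (i0 : 'I_N) : letters_blockable setT -> forall a,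
  (forall i, in_ker_phi L i a) <-> exists z, opeq L a (opscale z (@Qempty R d N)).
Proof.
move=> block a; split=> [ker|[z az] i].
  have inAa := (ker i0).1; exists (diag_entry a e0) => f l2f.
  apply: funext => w; rewrite /opscale /Qempty.
  have [->|w_neq0] := eqVneq w e0; first by rewrite (inA_diag inAa l2f L_emptyW).
  rewrite mulr0; case Lw: (L w); last exact: inA_supported inAa l2f _ (negbT Lw).
  have /forallPn [j wj] : ~~ [forall j, w j == [::]] by rewrite -eq_emptyW.
  by rewrite (inA_diag inAa l2f Lw) (ker_phi_diag_entry (ker j) Lw wj) mul0r.
have inA_zQ : inA L (opscale z (@Qempty R d N)).
  by apply/alg0_inA/alg0_scale/alg0_Qempty.
split=> [|x inXx f l2f]; first exact: inA_ext az inA_zQ.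
rewrite /opmul az; last exact: inXx.1.1 f l2f.
apply: funext => w; rewrite /opscale /Qempty /op0.
by case: eqP => [->|_]; rewrite ?(inX_vanish inXx l2f) ?mulr0 // ffunE.
Qed.

Lemma ker_phi_neq0_of_scalar : (forall a, (forall i, in_ker_phi L i a) <->
    exists z, opeq L a (opscale z (@Qempty R d N))) ->
  exists a, (forall i, in_ker_phi L i a) /\ ~ opeq L a (@op0 R d N).
Proof.
move=> scalar; exists (@Qempty R d N); split; last exact: Qempty_neq0.
by apply/scalar; exists 1 => f _; apply: funext => w; rewrite /opscale mul1r.
Qed.

Lemma ker_phi_neq0P : (exists a, (forall i, in_ker_phi L i a) /\ ~ opeq L a (@op0 R d N))
  <-> letters_blockable setT.
Proof.
rewrite -ker_phi_Q_neq0P Q_setCT.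
by split=> -[a [ker a_neq0]]; exists a; split=> // i; apply: ker (in_setT i).
Qed.

Lemma inA_QemptyP : (exists a, inA L a /\ opeq L a (@Qempty R d N))
  <-> letters_blockable setT.
Proof. by rewrite -inA_Q_QemptyP Q_setCT. Qed.

End FactorialLanguage.

Theorem proposition9p17 (R : realType) (d N : nat) (L : pred (W d N))
    (F : {set 'I_N}) :
  factorial_language L -> F != set0 ->
  let Fc := ~: F in
  let cond_i := exists a : Op R d N,
      (forall i, i \in F -> in_ker_phi L i a) /\
      ~ opeq L (opmul a (Q L Fc)) (@op0 R d N) in
  let cond_ii := exists a : Op R d N,
      inA L a /\ opeq L (opmul a (Q L Fc)) (@Qempty R d N) in
  let cond_iii := forall (i : 'I_N) (k : 'I_d), i \in F -> L (delta i k) ->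
      exists mu : W d N, L mu /\ ~~ L (wcat mu (delta i k)) in
  let cond_iv := forall a : Op R d N,
      (forall i, in_ker_phi L i a) <->
      (exists z : CC R, opeq L a (opscale z (@Qempty R d N))) in
  let cond_v := exists a : Op R d N,
      (forall i, in_ker_phi L i a) /\ ~ opeq L a (@op0 R d N) in
  let cond_vi := exists a : Op R d N, inA L a /\ opeq L a (@Qempty R d N) in
  (cond_i <-> cond_ii) /\ (cond_ii <-> cond_iii) /\
  (F = setT -> (cond_iii <-> cond_iv) /\ (cond_iii <-> cond_v) /\
               (cond_iii <-> cond_vi)).
Proof.
move=> [letters L_infix] /set0Pn [i0 _]; cbv zeta.
have L0 : L (emptyW d N).
  by have [k Lk] := letters i0; apply: L_infix Lk _ => j; rewrite ffunE infix0s.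
have i_iii := ker_phi_Q_neq0P R L_infix L0 F.
have ii_iii := inA_Q_QemptyP R L_infix L0 F.
rewrite /letters_blockable in i_iii ii_iii.
split; first tauto; split; first tauto.
move=> ->{i_iii ii_iii}.
have iii_iv := ker_phi_scalarP (R := R) L_infix L0 i0.
have iv_v := ker_phi_neq0_of_scalar (R := R) L0.
have v_iii := ker_phi_neq0P R L_infix L0.
have vi_iii := inA_QemptyP R L_infix L0.
rewrite /letters_blockable in iii_iv v_iii vi_iii.
by split; [|split]; tauto.
Qed.
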